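(* Let $A$ be an $n\times n$ complex matrix, let $B=A-\frac{\operatorname{tr}A}{n}I$, and let $r$ be a positive integer. Then $$\operatorname{spd}(A)^{2r}\le 2^{2r-1}\operatorname{tr}\big(B^r(B^* )^r\big).$$
   Context: For $A$ with eigenvalues $\lambda_1,\dots,\lambda_n$ (counted with multiplicity), the spread is $\operatorname{spd}(A)=\max_{i,j}|\lambda_i-\lambda_j|$. $B^*$ is the conjugate transpose of $B$. *)

From HB Require Import structures.
From mathcomp Require Import all_boot all_order all_algebra.
Set Implicit Arguments. Unset Strict Implicit. Unset Printing Implicit Defensive.
Import Order.TTheory GRing.Theory Num.Theory.
Local Open Scope ring_scope.

(* Eigenvalues of a square complex matrix, counted with multiplicity:
   a sequence s with char_poly A = \prod_(z <- s) ('X - z). *)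
Lemma eigvals_exists (C : numClosedFieldType) (n : nat) (A : 'M[C]_n) :
  exists s : seq C, char_poly A == \prod_(z <- s) ('X - z%:P).
Proof.
have [s Hs] := closed_field_poly_normal (char_poly A).
exists s; apply/eqP; rewrite Hs.
by have /monicP -> := char_poly_monic A; rewrite scale1r.
Qed.

Definition eigvals (C : numClosedFieldType) (n : nat) (A : 'M[C]_n) : seq C :=
  xchoose (eigvals_exists A).

Lemma eigvalsE (C : numClosedFieldType) (n : nat) (A : 'M[C]_n) :
  char_poly A = \prod_(z <- eigvals A) ('X - z%:P).
Proof. exact/eqP/(xchooseP (eigvals_exists A)). Qed.

(* spread: max_{i,j} |lambda_i - lambda_j| (0 for the empty matrix) *)
Definition spd (C : numClosedFieldType) (n : nat) (A : 'M[C]_n) : C :=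
  \big[Num.max/0]_(x <- eigvals A) \big[Num.max/0]_(y <- eigvals A) `|x - y|.

Definition adjmx (C : numClosedFieldType) (m n : nat) (B : 'M[C]_(m, n)) : 'M[C]_(n, m) :=
  map_mx Num.conj B^T.

From mathcomp Require Import all_boot all_order all_algebra.
From mathcomp Require Import spectral ring.
Set Implicit Arguments. Unset Strict Implicit. Unset Printing Implicit Defensive.
Import Order.TTheory GRing.Theory Num.Theory.
Local Open Scope ring_scope.
Local Open Scope sesquilinear_scope.

(* Schur triangularization A = adj P * T * P (P unitary) puts the
   eigenvalues of A on the diagonal of T, and B = adj P * S * P with
   S := T - (tr A / n) I again triangular. A difference of two eigenvalues is
   thus a difference s_i - s_j of diagonal entries of S, and the power-mean
   inequality gives |s_i - s_j|^(2r) <= 2^(2r-1) (|s_i|^(2r) + |s_j|^(2r)).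
   Now S^r is triangular with diagonal entries s_k^r, so the right-hand side
   is at most 2^(2r-1) times the squared Frobenius norm of S^r, which equals
   tr (B^r (adj B)^r) by unitary invariance. *)

Lemma ler_chebyshev2 (R : numDomainType) (m : nat) (a b : R) :
  0 <= a -> 0 <= b -> (a + b) * (a ^+ m + b ^+ m) <= 2 * (a ^+ m.+1 + b ^+ m.+1).
Proof.
move=> a0 b0; rewrite -subr_ge0.
have -> : 2 * (a ^+ m.+1 + b ^+ m.+1) - (a + b) * (a ^+ m + b ^+ m)
          = (a - b) * (a ^+ m - b ^+ m) by rewrite !exprS; ring.
case/orP: (real_leVge (ger0_real a0) (ger0_real b0)) => [ab|ba].
- by rewrite mulr_le0 // subr_le0 // lerXn2r.
- by rewrite mulr_ge0 // subr_ge0 // lerXn2r.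
Qed.

Lemma ler_exprD_mean (R : numDomainType) (m : nat) (a b : R) :
  0 <= a -> 0 <= b -> (a + b) ^+ m.+1 <= 2 ^+ m * (a ^+ m.+1 + b ^+ m.+1).
Proof.
move=> a0 b0; elim: m => [|m IH]; first by rewrite expr0 mul1r.
rewrite exprS (le_trans (ler_wpM2l (addr_ge0 a0 b0) IH)) //.
by rewrite mulrCA [2 ^+ m.+1]exprSr -mulrA ler_wpM2l ?exprn_ge0 ?ler_chebyshev2.
Qed.

Lemma ler_normB_expr (R : numDomainType) (m : nat) (x y : R) :
  `|x - y| ^+ m.+1 <= 2 ^+ m * (`|x| ^+ m.+1 + `|y| ^+ m.+1).
Proof.
apply: le_trans (ler_exprD_mean _ _ _) => //.
by rewrite lerXn2r ?nnegrE ?addr_ge0 ?ler_normB.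
Qed.

Lemma big_maxr_ind (R : numDomainType) (I : eqType) (K : R -> Prop) (s : seq I)
    (F : I -> R) :
  K 0 -> (forall i, i \in s -> K (F i)) -> K (\big[Num.max/0]_(i <- s) F i).
Proof.
move=> K0 KF; rewrite big_seq; apply: big_ind => // x y Kx Ky.
by rewrite maxElt; case: ifP.
Qed.

Section TriangularMatrices.
Variables (R : pzRingType) (n : nat).
Implicit Types S T : 'M[R]_n.

Lemma is_trig_mxB S T : is_trig_mx S -> is_trig_mx T -> is_trig_mx (S - T).
Proof.
move=> /is_trig_mxP S0 /is_trig_mxP T0; apply/is_trig_mxP => i j ij.
by rewrite !mxE S0 ?T0 ?subr0.
Qed.

Lemma is_trig_mxM S T : is_trig_mx S -> is_trig_mx T -> is_trig_mx (S *m T).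
Proof.
move=> /is_trig_mxP S0 /is_trig_mxP T0; apply/is_trig_mxP => i j ij.
rewrite mxE big1 // => k _; have [ik|ki] := ltnP i k; first by rewrite S0 ?mul0r.
by rewrite T0 ?mulr0 // (leq_ltn_trans ki ij).
Qed.

Lemma trig_mulmx_diag S T i :
  is_trig_mx S -> is_trig_mx T -> (S *m T) i i = S i i * T i i.
Proof.
move=> /is_trig_mxP S0 /is_trig_mxP T0.
rewrite mxE (bigD1 i) //= big1 ?addr0 // => k ki.
have [ik|] := ltnP i k; first by rewrite S0 ?mul0r.
rewrite leq_eqVlt => /orP [/eqP/val_inj ki_eq | lt_ki]; first by rewrite ki_eq eqxx in ki.
by rewrite T0 ?mulr0.
Qed.

Lemma is_trig_mxX T r : is_trig_mx T -> is_trig_mx (T ^+ r).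
Proof.
move=> Tt; elim: r => [|r IH]; first by rewrite expr0 scalar_mx_is_trig.
by rewrite exprS is_trig_mxM.
Qed.

Lemma trig_mxX_diag T r i : is_trig_mx T -> (T ^+ r) i i = T i i ^+ r.
Proof.
move=> Tt; elim: r => [|r IH]; first by rewrite !expr0 mxE eqxx.
by rewrite !exprS -IH trig_mulmx_diag ?is_trig_mxX.
Qed.

End TriangularMatrices.

Lemma eigenvalue_trig (F : fieldType) n (T : 'M[F]_n) a :
  is_trig_mx T -> eigenvalue T a -> exists i, a = T i i.
Proof.
rewrite eigenvalue_root_char => Tt; rewrite char_poly_trig // rootE horner_prod.
by move=> /prodf_eq0 [i _]; rewrite hornerXsubC subr_eq0 => /eqP ->; exists i.
Qed.

Section Conjugation.
Variables (F : fieldType) (n : nat).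
Implicit Types V f g : 'M[F]_n.

Lemma conjmxB V f g : conjmx V (f - g) = conjmx V f - conjmx V g.
Proof. by rewrite /conjmx mulmxBr mulmxBl. Qed.

Lemma conjmxX V f r : V \in unitmx -> conjmx V (f ^+ r) = conjmx V f ^+ r.
Proof.
move=> Vu; elim: r => [|r IH]; first by rewrite !expr0 conjmx_scalar ?row_free_unit.
by rewrite !exprS -IH -!mulmxE conjmxM ?inE ?stablemx_unit.
Qed.

Lemma eigenvalue_conjmx_unit V f a :
  V \in unitmx -> eigenvalue f a -> eigenvalue (conjmx V f) a.
Proof.
move=> Vu; rewrite -{1}(conjmxK f Vu); apply: eigenvalue_conjmx.
  by rewrite stablemx_unit ?unitmx_inv.
by rewrite row_free_unit unitmx_inv.
Qed.

End Conjugation.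

Section Adjoint.
Variable C : numClosedFieldType.

Lemma adjmxE m n (M : 'M[C]_(m, n)) : adjmx M = M ^t*.
Proof. by []. Qed.

Lemma adjmxM m n p (X : 'M[C]_(m, n)) (Y : 'M[C]_(n, p)) :
  adjmx (X *m Y) = adjmx Y *m adjmx X.
Proof. by rewrite /adjmx trmx_mul map_mxM. Qed.

Lemma adjmxX n (M : 'M[C]_n) r : adjmx (M ^+ r) = adjmx M ^+ r.
Proof.
elim: r => [|r IH]; first by apply/matrixP => i j; rewrite !mxE eq_sym conjC_nat.
by rewrite exprS exprSr -!mulmxE adjmxM IH.
Qed.

Lemma mxtrace_mul_adjmx n (M : 'M[C]_n) :
  \tr (M *m adjmx M) = \sum_i \sum_j `|M i j| ^+ 2.
Proof.
apply: eq_bigr => i _; rewrite mxE; apply: eq_bigr => j _.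
by rewrite normCK !mxE.
Qed.

Lemma mxtrace_mul_adjmx_ge0 n (M : 'M[C]_n) : 0 <= \tr (M *m adjmx M).
Proof.
rewrite mxtrace_mul_adjmx sumr_ge0 // => i _.
by rewrite sumr_ge0 // => j _; rewrite exprn_ge0.
Qed.

Lemma ler_diag2_mxtrace_adj n (M : 'M[C]_n) i j : i != j ->
  `|M i i| ^+ 2 + `|M j j| ^+ 2 <= \tr (M *m adjmx M).
Proof.
have row_ge0 k : 0 <= \sum_l `|M k l| ^+ 2 by apply: sumr_ge0 => l _; rewrite exprn_ge0.
have diag_le k : `|M k k| ^+ 2 <= \sum_l `|M k l| ^+ 2.
  by rewrite (bigD1 k) //= lerDl sumr_ge0 // => l _; rewrite exprn_ge0.
move=> ij; rewrite mxtrace_mul_adjmx (bigD1 i) //=.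
rewrite [X in _ <= _ + X](bigD1 j) 1?eq_sym //= addrA.
by rewrite ler_wpDr ?sumr_ge0 // lerD.
Qed.

Lemma mxtrace_adjmx_conj_unitary n (P M : 'M[C]_n) : P \is unitarymx ->
  \tr (conjmx P M *m adjmx (conjmx P M)) = \tr (M *m adjmx M).
Proof.
move=> Pu; have PtP : P^t* *m P = 1%:M by apply/mulmx1C/unitarymxP.
rewrite conjymx // !adjmxM !adjmxE trmxCK !mulmxA (mulmxKtV (P *m M) Pu) //.
by rewrite mxtrace_mulC !mulmxA PtP mul1mx.
Qed.

Lemma ler_trig_diagB_expr n (S : 'M[C]_n) r i j : (0 < r)%N -> is_trig_mx S ->
  `|S i i - S j j| ^+ (2 * r) <= 2 ^+ (2 * r - 1) * \tr (S ^+ r *m adjmx (S ^+ r)).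
Proof.
move=> r_gt0 St; have [<-|ij] := eqVneq i j.
  rewrite subrr normr0 expr0n muln_eq0 (gtn_eqF r_gt0).
  by rewrite mulr_ge0 ?exprn_ge0 ?mxtrace_mul_adjmx_ge0.
have two_r : (2 * r = (2 * r - 1).+1)%N by rewrite subn1 prednK // muln_gt0.
have diagX k : `|S k k| ^+ (2 * r) = `|(S ^+ r) k k| ^+ 2.
  by rewrite trig_mxX_diag // normrX -exprM mulnC.
rewrite [in X in X <= _]two_r (le_trans (ler_normB_expr _ _ _)) // -two_r !diagX.
by rewrite ler_wpM2l ?exprn_ge0 ?ler_diag2_mxtrace_adj.
Qed.

End Adjoint.

Theorem theorem3p3 (C : numClosedFieldType) (n : nat) (A : 'M[C]_n) (r : nat)
  (hn : (0 < n)%N) (hr : (0 < r)%N) :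
  let B := A - (\tr A / n%:R)%:M in
  spd A ^+ (2 * r) <= 2 ^+ (2 * r - 1) * \tr (B ^+ r *m (adjmx B) ^+ r).
Proof.
rewrite /=; set B := A - _%:M; have [P Pu T_trig] := Schur A hn.
have P_unit : P \in unitmx by exact: unitarymx_unit.
set T := conjmx P A in T_trig; set S := T - (\tr A / n%:R)%:M.
have S_trig : is_trig_mx S by rewrite is_trig_mxB ?scalar_mx_is_trig.
have PBE : conjmx P B = S by rewrite conjmxB conjmx_scalar // row_free_unit.
have trE : \tr (B ^+ r *m adjmx B ^+ r) = \tr (S ^+ r *m adjmx (S ^+ r)).
  by rewrite -adjmxX -PBE -conjmxX // mxtrace_adjmx_conj_unitary.
have eigT x : x \in eigvals A -> exists i, x = T i i.
  rewrite -root_prod_XsubC -eigvalsE -eigenvalue_root_char.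
  by move=> /(eigenvalue_conjmx_unit P_unit); apply: eigenvalue_trig.
have ST i j : T i i - T j j = S i i - S j j.
  by rewrite !mxE !eqxx !mulr1n opprB addrA subrK.
rewrite trE /spd; set rhs := _ * _.
have zero_le : (0 : C) ^+ (2 * r) <= rhs.
  by rewrite expr0n muln_eq0 (gtn_eqF hr) mulr_ge0 ?exprn_ge0 ?mxtrace_mul_adjmx_ge0.
pose K z := z ^+ (2 * r) <= rhs.
apply: (big_maxr_ind (K := K)) => // x /eigT [i ->].
apply: (big_maxr_ind (K := K)) => // y /eigT [j ->].
by rewrite /K ST ler_trig_diagB_expr.
Qed.
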